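(* Assume the Eliahou–Kryuchkov conjecture: for any two plane trees all of whose internal vertices are trivalent and which have the same number of twigs, there exist assignments of signs $\pm$ to the internal vertices of the two trees such that one signed tree can be transformed into the other by a finite sequence of signed reassociation moves. Then for any two bracketings $L$ and $R$ of the product of the same ordered sequence of $n$ variables $x_1,\dots,x_n$, there exists an assignment of values from $\{i,j,k\}$ to the variables such that $L=R$ in the vector cross product algebra (with both sides nonzero), together with a sequence of algebraic reassociations $(ab)c\leftrightarrow a(bc)$ applied to subexpressions taking $L$ to $R$ such that every intermediate bracketed product in the sequence is non-zero when evaluated as a vector cross product.
   Context: The vector cross product algebra is the algebra on $\mathbb{R}^3$ with basis $i,j,k$ and product the cross product: $ij=k$, $jk=i$, $ki=j$, $ji=-k$, $kj=-i$, $ik=-j$, $ii=jj=kk=0$. A bracketed product of $n$ ordered variables corresponds to a rooted binary plane tree with $n$ leaves (each trivalent vertex is a product of its two incoming edge labels). A twig is an edge incident to an end vertex of a tree. A reassociation move replaces a configuration of two adjacent trivalent vertices corresponding to $(ab)c$ by the one corresponding to $a(bc)$, or conversely. A signed reassociation move is allowed only when the two adjacent vertices involved carry the same sign, and after the move both vertices receive the opposite sign. *)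

From Stdlib Require Import Reals Relations.
Open Scope R_scope.

Definition vec : Type := (R * R * R)%type.

Definition cross (a b : vec) : vec :=
  let '(a1, a2, a3) := a in
  let '(b1, b2, b3) := b in
  (a2 * b3 - a3 * b2, a3 * b1 - a1 * b3, a1 * b2 - a2 * b1).

Definition vzero : vec := (0, 0, 0).

Inductive basis : Type := bi | bj | bk.

Definition bvec (e : basis) : vec :=
  match e with
  | bi => (1, 0, 0)
  | bj => (0, 1, 0)
  | bk => (0, 0, 1)
  end.

(** Rooted binary plane trees = bracketings (leaves are the variables). *)
Inductive tree : Type :=
| Leaf : tree
| Node : tree -> tree -> tree.

Fixpoint leaves (t : tree) : nat :=
  match t with
  | Leaf => 1
  | Node l r => (leaves l + leaves r)%nat
  end.

Fixpoint eval_from (t : tree) (k : nat) (f : nat -> basis) : vec :=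
  match t with
  | Leaf => bvec (f k)
  | Node l r => cross (eval_from l k f) (eval_from r (k + leaves l)%nat f)
  end.

(** Variables are x_0, ..., x_(n-1) (i.e. x_1..x_n shifted). *)
Definition eval (t : tree) (f : nat -> basis) : vec := eval_from t 0 f.

Inductive reassoc : tree -> tree -> Prop :=
| RA_lr a b c : reassoc (Node (Node a b) c) (Node a (Node b c))
| RA_rl a b c : reassoc (Node a (Node b c)) (Node (Node a b) c)
| RA_left l l' r : reassoc l l' -> reassoc (Node l r) (Node l' r)
| RA_right l r r' : reassoc r r' -> reassoc (Node l r) (Node l r').

Inductive nonzero_path (f : nat -> basis) : tree -> tree -> Prop :=
| NZ_refl t : eval t f <> vzero -> nonzero_path f t t
| NZ_step t u v : reassoc t u -> eval t f <> vzero ->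
    nonzero_path f u v -> nonzero_path f t v.

(** Signed trees: each internal (trivalent) vertex carries a sign
    (true = +, false = -). *)
Inductive stree : Type :=
| SLeaf : stree
| SNode : bool -> stree -> stree -> stree.

Fixpoint erase (s : stree) : tree :=
  match s with
  | SLeaf => Leaf
  | SNode _ l r => Node (erase l) (erase r)
  end.

Inductive sreassoc : stree -> stree -> Prop :=
| SRA_lr s a b c :
    sreassoc (SNode s (SNode s a b) c) (SNode (negb s) a (SNode (negb s) b c))
| SRA_rl s a b c :
    sreassoc (SNode s a (SNode s b c)) (SNode (negb s) (SNode (negb s) a b) c)
| SRA_left s l l' r : sreassoc l l' -> sreassoc (SNode s l r) (SNode s l' r)
| SRA_right s l r r' : sreassoc r r' -> sreassoc (SNode s l r) (SNode s l r').

(** Eliahou--Kryuchkov conjecture (rooted form: a plane trivalent tree with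
    n+1 twigs, rooted at a twig, is a rooted binary plane tree with n leaves;
    reassociation moves at internal edges are exactly the moves above). *)
Definition EK_conjecture : Prop :=
  forall t1 t2 : tree, leaves t1 = leaves t2 ->
    exists s1 s2 : stree,
      erase s1 = t1 /\ erase s2 = t2 /\ clos_refl_trans stree sreassoc s1 s2.

(* Colour a signed tree from the root downwards: a vertex of colour z and sign
   s passes to its children the colours x, y with x × y = s z.  Evaluating the
   underlying bracketing at the leaf colours then gives ± z, the sign being
   the product of all vertex signs.  A signed reassociation move changes
   neither the leaf colours (the triple of subtrees below the two vertices is
   coloured the same way on both sides) nor that product (two equal signs are
   flipped), so along a signed path joining signed versions of L and R every
   bracketing evaluates to the same nonzero vector at the leaf colouring of L. *)
From Stdlib Require Import Reals Relations Lra List Lia Bool.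
Import ListNotations.
Open Scope R_scope.

Definition children (s : bool) (z : basis) : basis * basis :=
  match z, s with
  | bk, true => (bi, bj) | bk, false => (bj, bi)
  | bi, true => (bj, bk) | bi, false => (bk, bj)
  | bj, true => (bk, bi) | bj, false => (bi, bk)
  end.

Fixpoint leaf_colors (t : stree) (z : basis) : list basis :=
  match t with
  | SLeaf => [z]
  | SNode s l r =>
      leaf_colors l (fst (children s z)) ++ leaf_colors r (snd (children s z))
  end.

(* With true = +1 and false = -1, [eqb] is multiplication of signs. *)
Fixpoint sign (t : stree) : bool :=
  match t with
  | SLeaf => true
  | SNode s l r => eqb s (eqb (sign l) (sign r))
  end.

Definition signed (p : bool) (v : vec) : vec :=
  if p then v else let '(v1, v2, v3) := v in (- v1, - v2, - v3).

Lemma cross_signed_children s z p q :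
  cross (signed p (bvec (fst (children s z)))) (signed q (bvec (snd (children s z))))
  = signed (eqb s (eqb p q)) (bvec z).
Proof. destruct s, z, p, q; cbv -[Rmult Rminus Ropp]; f_equal; try f_equal; ring. Qed.

Lemma signed_bvec_neq0 p z : signed p (bvec z) <> vzero.
Proof. destruct p, z; cbv -[Ropp]; intros H; injection H; intros; lra. Qed.

Lemma length_leaf_colors t z : length (leaf_colors t z) = leaves (erase t).
Proof.
  revert z; induction t as [|s l IHl r IHr]; intros z; simpl; auto.
  now rewrite length_app, IHl, IHr.
Qed.

Lemma eval_from_leaf_colors t z k f :
  (forall i, (i < leaves (erase t))%nat -> f (k + i)%nat = nth i (leaf_colors t z) bi) ->
  eval_from (erase t) k f = signed (sign t) (bvec z).
Proof.
  revert z k; induction t as [|s l IHl r IHr]; intros z k Hf; simpl in *.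
  - rewrite <- (Nat.add_0_r k), (Hf 0%nat); auto.
  - rewrite IHl with (z := fst (children s z)), IHr with (z := snd (children s z));
      [apply cross_signed_children| |].
    + intros i Hi; rewrite <- Nat.add_assoc, Hf by lia.
      rewrite app_nth2, length_leaf_colors by (rewrite length_leaf_colors; lia).
      f_equal; lia.
    + intros i Hi; rewrite Hf by lia.
      apply app_nth1; rewrite length_leaf_colors; lia.
Qed.

Corollary eval_leaf_colors t z :
  eval (erase t) (fun i => nth i (leaf_colors t z) bi) = signed (sign t) (bvec z).
Proof. now apply eval_from_leaf_colors. Qed.

Lemma sreassoc_erase s t : sreassoc s t -> reassoc (erase s) (erase t).
Proof. induction 1; simpl; now constructor. Qed.

Lemma sreassoc_sign s t : sreassoc s t -> sign s = sign t.
Proof.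
  induction 1; simpl; try congruence;
    destruct s, (sign a), (sign b), (sign c); reflexivity.
Qed.

Lemma sreassoc_leaf_colors s t z : sreassoc s t -> leaf_colors s z = leaf_colors t z.
Proof.
  intros H; revert z; induction H; intros z; simpl; try congruence;
    destruct s, z; simpl; now rewrite app_assoc.
Qed.

Lemma clos_refl_trans_invariant {A : Type} (R : relation A) (P : A -> Prop) x y :
  (forall u v, R u v -> P u -> P v) -> clos_refl_trans A R x y -> P x -> P y.
Proof. intros HP Hxy; induction Hxy; eauto. Qed.

Lemma nonzero_path_sreassoc (P : stree -> Prop) f s t :
  (forall u v, sreassoc u v -> P u -> P v) ->
  (forall u, P u -> eval (erase u) f <> vzero) ->
  clos_refl_trans stree sreassoc s t -> P s ->
  nonzero_path f (erase s) (erase t).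
Proof.
  intros HP Hnz Hst; apply clos_rt_rt1n in Hst.
  induction Hst as [s|s u t Hsu _ IH]; intros Hs.
  - now constructor; apply Hnz.
  - apply NZ_step with (erase u); auto using sreassoc_erase.
    apply IH; now apply HP with s.
Qed.

Theorem mainTheorem4 :
  EK_conjecture ->
  forall tL tR : tree, leaves tL = leaves tR ->
    exists f : nat -> basis,
      eval tL f = eval tR f /\ eval tL f <> vzero /\ nonzero_path f tL tR.
Proof.
  intros EK tL tR Hleaves.
  destruct (EK tL tR Hleaves) as [sL [sR [<- [<- HLR]]]].
  set (C := leaf_colors sL bk).
  set (P := fun u => leaf_colors u bk = C /\ sign u = sign sL).
  assert (HL : P sL) by (split; reflexivity).
  assert (HP : forall u v, sreassoc u v -> P u -> P v).
  { intros u v Huv [HC Hs]; split.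
    - now rewrite <- (sreassoc_leaf_colors _ _ bk Huv).
    - now rewrite <- (sreassoc_sign _ _ Huv). }
  assert (Heval : forall u, P u ->
            eval (erase u) (fun i => nth i C bi) = signed (sign sL) (bvec bk)).
  { intros u [HC Hs]; rewrite <- HC, <- Hs; apply eval_leaf_colors. }
  assert (HR : P sR) by (apply clos_refl_trans_invariant with sreassoc sL; auto).
  exists (fun i => nth i C bi); repeat split.
  - now rewrite !Heval.
  - rewrite Heval by exact HL; apply signed_bvec_neq0.
  - apply nonzero_path_sreassoc with P; auto.
    intros u Hu; rewrite Heval by exact Hu; apply signed_bvec_neq0.
Qed.
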